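(* Let $S$ be a species tree, $(T,\sigma)$ a gene tree, and $\mu:V(T)\to V(S)\cup E(S)$ a reconciliation map without horizontal gene transfer (satisfying (R0), (R1), (R2), (R3.i), (R3.ii)) that in addition satisfies axiom (R4). Let $A\subseteq L(T)$ with $|\sigma(A)|\geq 2$. If $\operatorname{lca}_S(\sigma(A))\prec_S\mu(\operatorname{lca}_T(A))$, then $\operatorname{lca}_T(A)$ is a duplication event, i.e., $\mu(\operatorname{lca}_T(A))\in E(S)$.
   Context: A planted phylogenetic tree $T$ has a distinguished leaf $0_T$ (the planted root) whose unique neighbour $\rho_T$ is the root; every other non-leaf vertex has at least two children. $L(T)$ denotes the leaves other than $0_T$. For vertices, $a\preceq_T b$ means $b$ lies on the path from $a$ to $0_T$; $\operatorname{lca}_T(A)$ is the $\preceq_T$-minimal vertex that is $\succeq_T$ every element of $A$. A species tree $S$ is a planted phylogenetic tree with planted root $0_S$, root $\rho_S$ and leaf set $\mathscr{S}$ (the species); $V^0(S)$ denotes the inner vertices of $S$ (neither leaves nor $0_S$). The order $\preceq_S$ is extended to $V(S)\cup E(S)$ by regarding each edge $e=pq$ ($q$ a child of $p$) as lying strictly between $q$ and $p$: $q\prec_S e\prec_S p$, a vertex $w$ satisfies $w\prec_S e$ iff $w\preceq_S q$ and $e\prec_S w$ iff $p\preceq_S w$, and for edges $e=pq,e'=p'q'$, $e\prec_S e'$ iff $p\preceq_S q'$; $\operatorname{lca}_S$ of elements of $V(S)\cup E(S)$ is the $\preceq_S$-minimal vertex above all of them. A gene tree $(T,\sigma)$ is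 a planted phylogenetic tree with $\sigma:L(T)\to\mathscr{S}$. A reconciliation map without horizontal gene transfer is $\mu:V(T)\to V(S)\cup E(S)$ with: (R0) $\mu(v)=0_S$ iff $v=0_T$; (R1) $\mu(v)=\sigma(v)$ for $v\in L(T)$; (R2) $v\prec_T w\Rightarrow\mu(v)\preceq_S\mu(w)$; and for each $v$ with $\mu(v)\in V^0(S)$: (R3.i) $\mu(v)=\operatorname{lca}_S(\mu(v'),\mu(v''))$ for at least two distinct children $v',v''$ of $v$; (R3.ii) $\mu(v'),\mu(v'')$ are $\preceq_S$-incomparable for any two distinct children $v',v''$ of $v$. Axiom (R4): for leaves $x,y,z$ of $T$, if $\mu(\operatorname{lca}_T(x,y))=\mu(\operatorname{lca}_T(x,z))\in V^0(S)$ then $\operatorname{lca}_S(\sigma(x),\sigma(y))=\operatorname{lca}_S(\sigma(x),\sigma(z))$. A vertex $v$ of $T$ is a duplication if $\mu(v)\in E(S)$. *)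

From mathcomp Require Import all_boot.
Set Implicit Arguments. Unset Strict Implicit. Unset Printing Implicit Defensive.

(* A rooted tree on a finite vertex set, given by a parent map.
   [root0] is the planted root 0_T; by convention [par root0 = root0].
   Every vertex reaches root0 by iterating [par] (acyclicity / connectivity).
   The edges are exactly the pairs {par w, w} with w <> root0. *)
Record ptree := PTree {
  pt_V :> finType;
  root0 : pt_V;
  par : pt_V -> pt_V;
  par_root0 : par root0 = root0;
  par_reach : forall v, exists k, iter k par v = root0
}.

Definition child (T : ptree) (v w : T) : Prop := w <> root0 T /\ par w = v.

Definition is_leaf (T : ptree) (v : T) : Prop :=
  v <> root0 T /\ forall w, ~ child v w.

Definition planted_phylo (T : ptree) : Prop :=
  (exists! r, child (root0 T) r) /\
  (forall v : T, v <> root0 T -> (exists w, child v w) ->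
     exists w1 w2, w1 <> w2 /\ child v w1 /\ child v w2).

Definition anc (T : ptree) (a b : T) : Prop := exists k, iter k (@par T) a = b.
Definition sanc (T : ptree) (a b : T) : Prop := anc a b /\ a <> b.

Definition upper (T : ptree) (A : T -> Prop) (v : T) : Prop :=
  forall a, A a -> anc a v.
Definition is_lca (T : ptree) (A : T -> Prop) (v : T) : Prop :=
  upper A v /\ forall u, upper A u -> anc u v -> u = v.

(* Elements of V(S) u E(S); an edge pq (q child of p) is represented by
   its lower endpoint q (any vertex other than 0_S). *)
Inductive selt (S : ptree) : Type :=
| SV : S -> selt S
| SE : {q : S | q != root0 S} -> selt S.

Definition sle (S : ptree) (x y : selt S) : Prop :=
  match x, y with
  | SV a, SV b => anc a b
  | SV a, SE e => anc a (val e)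
  | SE e, SV b => anc (par (val e)) b
  | SE e, SE e' => e = e' \/ anc (par (val e)) (val e')
  end.
Definition slt (S : ptree) (x y : selt S) : Prop := sle x y /\ x <> y.
Definition incomparable (S : ptree) (x y : selt S) : Prop :=
  ~ sle x y /\ ~ sle y x.

Definition supper (S : ptree) (P : selt S -> Prop) (w : S) : Prop :=
  forall x, P x -> sle x (SV w).
Definition is_lcaS (S : ptree) (P : selt S -> Prop) (w : S) : Prop :=
  supper P w /\ forall w', supper P w' -> anc w' w -> w' = w.

Definition inner (S : ptree) (w : S) : Prop := w <> root0 S /\ ~ is_leaf w.

Definition reconciliation (T S : ptree) (sigma : T -> S) (mu : T -> selt S)
  : Prop :=
  (forall v, mu v = SV (root0 S) <-> v = root0 T) /\
  (forall v, is_leaf v -> mu v = SV (sigma v)) /\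
  (forall v w, sanc v w -> sle (mu v) (mu w)) /\
  (forall v x, mu v = SV x -> inner x ->
      (exists v1 v2, child v v1 /\ child v v2 /\ v1 <> v2 /\
                 is_lcaS (fun y => y = mu v1 \/ y = mu v2) x) /\
      (forall v1 v2, child v v1 -> child v v2 -> v1 <> v2 ->
                 incomparable (mu v1) (mu v2))).

Definition axiomR4 (T S : ptree) (sigma : T -> S) (mu : T -> selt S) : Prop :=
  forall x y z : T, is_leaf x -> is_leaf y -> is_leaf z ->
  forall a b, is_lca (fun u => u = x \/ u = y) a ->
              is_lca (fun u => u = x \/ u = z) b ->
  mu a = mu b -> (exists w, mu a = SV w /\ inner w) ->
  forall c d, is_lcaS (fun s => s = SV (sigma x) \/ s = SV (sigma y)) c ->
              is_lcaS (fun s => s = SV (sigma x) \/ s = SV (sigma z)) d ->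
  c = d.

From mathcomp Require Import all_boot.
From Stdlib Require Import Classical ClassicalDescription.

Set Implicit Arguments.
Unset Strict Implicit.
Unset Printing Implicit Defensive.

(* Suppose mu(a) = w is a vertex although lca_S(sigma(A)) = s lies strictly
   below it.  Pick x in A, the child a1 of a above x, and y in A outside a1,
   so that lca_T(x, y) = a.  For every leaf z below a but outside a1 we also
   have lca_T(x, z) = a, so (R4) forces sigma(z) below c := lca_S(sigma x,
   sigma y) <= s.  Every child of a thus has a leaf below it whose species lies
   below c; since the images of the two children given by (R3) are
   incomparable and have lca w, this gives w <= c <= s < w. *)

Definition pbool (P : Prop) : bool :=
  if excluded_middle_informative P then true else false.

Lemma pboolP (P : Prop) : reflect P (pbool P).
Proof. by rewrite /pbool; case: excluded_middle_informative; constructor. Qed.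

Section Tree.
Variable T : ptree.
Implicit Types u v w : T.

Lemma iter_par_root0 n : iter n (@par T) (root0 T) = root0 T.
Proof. by elim: n => //= n ->; exact: par_root0. Qed.

Lemma anc_refl v : anc v v. Proof. by exists 0. Qed.

Lemma anc_trans u v w : anc u v -> anc v w -> anc u w.
Proof. by move=> [i Hi] [j Hj]; exists (j + i); rewrite iterD Hi Hj. Qed.

Lemma anc_par v : anc v (par v). Proof. by exists 1. Qed.

Lemma anc_root0 v : anc v (root0 T). Proof. exact: par_reach. Qed.

Lemma child_anc v c : child v c -> anc c v.
Proof. by move=> [_ <-]; exact: anc_par. Qed.

Lemma iter_par_cycle n v : 0 < n -> iter n (@par T) v = v -> v = root0 T.
Proof.
move=> n_gt0 cyc; have [m Hm] := par_reach v.
have iter_mul k : iter (k * n) (@par T) v = v.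
  by elim: k => //= k IH; rewrite mulSn iterD IH cyc.
have le_m : m <= m * n by rewrite leq_pmulr.
by rewrite -(iter_mul m) -(subnK le_m) iterD Hm iter_par_root0.
Qed.

Lemma par_neq v : v <> root0 T -> par v <> v.
Proof. by move=> vN0 fix_v; apply/vN0/(@iter_par_cycle 1). Qed.

Lemma anc_antisym u v : anc u v -> anc v u -> u = v.
Proof.
move=> [i Hi] [j Hj]; have [/eqP|ji_gt0] := posnP (j + i).
  by rewrite addn_eq0 => /andP[_ /eqP i0]; rewrite -Hi i0.
have /(iter_par_cycle ji_gt0) u0 : iter (j + i) (@par T) u = u.
  by rewrite iterD Hi Hj.
by rewrite -Hi u0 iter_par_root0.
Qed.

Lemma anc_comparable u v w : anc u v -> anc u w -> anc v w \/ anc w v.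
Proof.
move=> [i <-] [j <-]; have [le_ij|lt_ji] := leqP i j.
  by left; exists (j - i); rewrite -iterD subnK.
by right; exists (i - j); rewrite -iterD subnK // ltnW.
Qed.

Lemma anc_par_of_neq u v : anc u v -> u <> v -> anc (par u) v.
Proof. by move=> [[|k] Hk] uNv; [case: uNv | exists k; rewrite -iterSr]. Qed.

Lemma anc_child u v : anc u v -> u <> v -> exists c, child v c /\ anc u c.
Proof.
move=> [k]; elim: k v => [|k IH] v Hk uNv; first by case: uNv.
set c := iter k (@par T) u.
have [cv|cNv] := classic (c = v); first exact: IH cv uNv.
exists c; split; last by exists k.
split; last by rewrite -Hk iterS.
by move=> c0; apply: cNv; rewrite -Hk iterS -/c c0 par_root0.
Qed.

Lemma anc_neq_not_leaf u v : anc u v -> u <> v -> ~ is_leaf v.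
Proof. by move=> uv uNv [_ no_child]; have [c [vc _]] := anc_child uv uNv; exact: no_child vc. Qed.

(* Descending strictly enlarges the set of ancestors, so a vertex with the
   most ancestors is minimal. *)
Lemma exists_anc_minimal (P : T -> Prop) u0 : P u0 ->
  exists u, P u /\ forall u', P u' -> anc u' u -> u' = u.
Proof.
move=> /(introT (pboolP _)) Pu0.
have [u /pboolP Pu u_max] :=
  @arg_maxnP _ u0 (fun u => pbool (P u)) (fun u => #|[set w | pbool (anc u w)]|) Pu0.
exists u; split=> // u' Pu' u'u; apply: NNPP => u'Nu.
suff : #|[set w | pbool (anc u w)]| < #|[set w | pbool (anc u' w)]|.
  by have /= := u_max u' (introT (pboolP _) Pu'); rewrite leqNgt => /negP.
apply: proper_card; apply/properP; split.
  by apply/subsetP => x; rewrite !inE => /pboolP ux; apply/pboolP/(anc_trans u'u).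
exists u'; rewrite !inE; first exact/pboolP/anc_refl.
by apply/negP => /pboolP uu'; apply/u'Nu/(anc_antisym u'u).
Qed.

Lemma exists_leaf_below v : v <> root0 T -> exists z, is_leaf z /\ anc z v.
Proof.
move=> vN0.
have [u [[uv uN0] u_min]] :=
  @exists_anc_minimal (fun u => anc u v /\ u <> root0 T) v (conj (anc_refl v) vN0).
exists u; split=> //; split=> // c [cN0 pc].
have cu : anc c u by rewrite -pc; exact: anc_par.
have cEu := u_min c (conj (anc_trans cu uv) cN0) cu.
by apply: (par_neq uN0); rewrite -{2}pc cEu.
Qed.

Lemma child_anc_child (a c c' : T) : child a c -> child a c' -> anc c c' -> c = c'.
Proof.
move=> [_ pc] ac' cc'; apply: NNPP => cNc'.
have ac'_anc : anc a c' by rewrite -pc; exact: anc_par_of_neq.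
have c'Ea : c' = a := anc_antisym (child_anc ac') ac'_anc.
by case: ac' => c'N0 pc'; apply: (par_neq c'N0); rewrite pc' c'Ea.
Qed.

Lemma anc_child_disjoint (a c1 c2 z : T) :
  child a c1 -> child a c2 -> c1 <> c2 -> anc z c1 -> ~ anc z c2.
Proof.
move=> ac1 ac2 c1Nc2 zc1 zc2; apply: c1Nc2.
case: (anc_comparable zc1 zc2) => [c1c2|c2c1]; first exact: child_anc_child ac1 ac2 c1c2.
by apply/esym/(child_anc_child ac2 ac1).
Qed.

Lemma child_neq (a c : T) : child a c -> c <> a.
Proof. by move=> [cN0 <-] /esym; exact: par_neq. Qed.

Lemma is_lca2_child (a c p q : T) :
  child a c -> anc p c -> anc q a -> ~ anc q c -> is_lca (fun u => u = p \/ u = q) a.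
Proof.
move=> ac pc qa qNc; have ca := child_anc ac.
split=> [_ [->|->] //|u u_up ua]; first exact: anc_trans pc ca.
have [pu qu] := (u_up p (or_introl erefl), u_up q (or_intror erefl)).
case: (anc_comparable pc pu) => [cu|uc]; last by case: qNc; exact: anc_trans qu uc.
have [cEu|cNu] := classic (c = u); first by case: qNc; rewrite cEu.
by case: ac (anc_par_of_neq cu cNu) => _ -> /(anc_antisym ua).
Qed.

Lemma is_lca_split (P : T -> Prop) a x : is_lca P a -> P x -> x <> a ->
  exists c y, [/\ child a c, anc x c, P y & ~ anc y c].
Proof.
move=> [a_up a_min] Px xNa; have [c [ac xc]] := anc_child (a_up x Px) xNa.
exists c; apply: NNPP => no_y; apply: (child_neq ac); apply: a_min (child_anc ac).
by move=> y Py; apply: NNPP => yNc; apply: no_y; exists y.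
Qed.

Lemma planted_anc_child_root0 (c v : T) : planted_phylo T ->
  child (root0 T) c -> v <> root0 T -> anc v c.
Proof.
move=> [[r [_ r_uniq]] _] c_child vN0.
have [c' [c'_child vc']] := anc_child (anc_root0 v) vN0.
by rewrite -(r_uniq c c_child) (r_uniq c' c'_child).
Qed.

End Tree.

Section SpeciesOrder.
Variable S : ptree.
Implicit Types (X Y : selt S) (u v : S).

(* An element X of V(S) u E(S) is treated as the vertex interval
   [lo X, hi X]; [sleE] reduces <=_S to the ancestor order on endpoints. *)
Definition lo X : S := match X with SV a => a | SE e => val e end.
Definition hi X : S := match X with SV a => a | SE e => par (val e) end.

Lemma sleE X Y : sle X Y <-> X = Y \/ anc (hi X) (lo Y).
Proof.
case: X => [a|e]; case: Y => [b|e'] /=.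
- by split; [right | case=> [[<-]|//]; exact: anc_refl].
- by split; [right | case].
- by split; [right | case].
- by split; [case=> [->|]; [left | right] | case=> [[->]|]; [left | right]].
Qed.

Lemma anc_lo_hi X : anc (lo X) (hi X).
Proof. by case: X => [a|e] /=; [exact: anc_refl | exact: anc_par]. Qed.

Lemma sle_refl X : sle X X. Proof. by apply/sleE; left. Qed.

Lemma sle_trans X Y Z : sle X Y -> sle Y Z -> sle X Z.
Proof.
move=> /sleE [->//|XY] /sleE [<-|YZ]; apply/sleE; right=> //.
exact: anc_trans XY (anc_trans (anc_lo_hi Y) YZ).
Qed.

Lemma sle_SVl u X : sle (SV u) X <-> anc u (lo X). Proof. by case: X. Qed.
Lemma sle_SVr X u : sle X (SV u) <-> anc (hi X) u. Proof. by case: X. Qed.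

Lemma anc_hi X u : anc (lo X) u -> lo X <> u -> anc (hi X) u.
Proof. by case: X => [a|e] /= Xu XNu //; exact: anc_par_of_neq. Qed.

Lemma sle_comparable_lo X Y : anc (lo X) (lo Y) -> sle X Y \/ sle Y X.
Proof.
move=> XY; have [XEY|XNY] := classic (lo X = lo Y); last first.
  by left; apply/sleE; right; exact: anc_hi.
case: X XEY {XY} => [a|e]; case: Y => [b|e'] /= XEY.
- by left; rewrite XEY; exact: anc_refl.
- by left; rewrite /= XEY; exact: anc_refl.
- by right; rewrite /= XEY; exact: anc_refl.
- by left; left; apply: val_inj.
Qed.

Lemma sle_comparable u X Y : sle (SV u) X -> sle (SV u) Y -> sle X Y \/ sle Y X.
Proof.
move=> /sle_SVl uX /sle_SVl uY; case: (anc_comparable uX uY).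
  exact: sle_comparable_lo.
by case/sle_comparable_lo; [right | left].
Qed.

Lemma lcaS_anc (P : selt S -> Prop) c X u :
  is_lcaS P c -> P X -> supper P u -> anc c u.
Proof.
move=> [c_up c_min] PX u_up.
have Xc : anc (lo X) c by apply: anc_trans (anc_lo_hi X) _; apply/sle_SVr/c_up.
have Xu : anc (lo X) u by apply: anc_trans (anc_lo_hi X) _; apply/sle_SVr/u_up.
by case: (anc_comparable Xc Xu) => // uc; rewrite (c_min u u_up uc); exact: anc_refl.
Qed.

Lemma lcaS2_exists u v : exists c, is_lcaS (fun s => s = SV u \/ s = SV v) c.
Proof.
have [c [[uc vc] c_min]] :=
  @exists_anc_minimal S (fun c => anc u c /\ anc v c) _ (conj (anc_root0 u) (anc_root0 v)).
exists c; split=> [_ [->|->] //|c' c'_up c'c].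
by apply: c_min c'c; split; [exact: c'_up (SV u) (or_introl erefl) | exact: c'_up (SV v) (or_intror erefl)].
Qed.

Lemma lcaS2_upper u v c :
  is_lcaS (fun s => s = SV u \/ s = SV v) c -> anc u c /\ anc v c.
Proof. by move=> [c_up _]; split; [exact: c_up (SV u) (or_introl erefl) | exact: c_up (SV v) (or_intror erefl)]. Qed.

Lemma incomparable_lcaS_anc X Y w p q u :
  is_lcaS (fun Z => Z = X \/ Z = Y) w -> incomparable X Y ->
  sle (SV p) X -> sle (SV q) Y -> anc p u -> anc q u -> anc w u.
Proof.
move=> lca_w [XNY YNX] pX qY pu qu.
(* u is comparable with X and with Y; incomparability forces u above both. *)
case: (sle_comparable pX (pu : sle (SV p) (SV u))) => [Xu|uX];
  case: (sle_comparable qY (qu : sle (SV q) (SV u))) => [Yu|uY].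
- by apply: (lcaS_anc lca_w (or_introl erefl)) => _ [->|->].
- by case: XNY; exact: sle_trans Xu uY.
- by case: YNX; exact: sle_trans Yu uX.
- by case: (sle_comparable uX uY).
Qed.

End SpeciesOrder.

Section Reconciliation.
Variables (S T : ptree) (sigma : T -> S) (mu : T -> selt S).
Hypothesis mu_leaf : forall v, is_leaf v -> mu v = SV (sigma v).
Hypothesis mu_mono : forall v w, sanc v w -> sle (mu v) (mu w).
Hypothesis mu_inner : forall v x, mu v = SV x -> inner x ->
  (exists v1 v2, child v v1 /\ child v v2 /\ v1 <> v2 /\
     is_lcaS (fun y => y = mu v1 \/ y = mu v2) x) /\
  (forall v1 v2, child v v1 -> child v v2 -> v1 <> v2 -> incomparable (mu v1) (mu v2)).
Hypothesis mu_R4 : axiomR4 sigma mu.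

Lemma sle_sigma_mu z v : is_leaf z -> anc z v -> sle (SV (sigma z)) (mu v).
Proof.
move=> z_leaf zv; rewrite -(mu_leaf z_leaf).
by have [<-|zNv] := classic (z = v); [exact: sle_refl | exact: mu_mono].
Qed.

Section Speciation.
Variables (a : T) (w : S) (a1 x y : T) (c : S).
Hypotheses (mu_a : mu a = SV w) (w_inner : inner w) (a_a1 : child a a1).
Hypotheses (x_leaf : is_leaf x) (x_a1 : anc x a1).
Hypotheses (y_leaf : is_leaf y) (y_a : anc y a) (y_a1 : ~ anc y a1).
Hypothesis lca_c : is_lcaS (fun s => s = SV (sigma x) \/ s = SV (sigma y)) c.

Lemma sigma_anc_lcaS z : is_leaf z -> anc z a -> ~ anc z a1 -> anc (sigma z) c.
Proof.
move=> z_leaf za zNa1; have [d lca_d] := lcaS2_exists (sigma x) (sigma z).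
have cEd : c = d.
  have lca_xy := is_lca2_child a_a1 x_a1 y_a y_a1.
  have lca_xz := is_lca2_child a_a1 x_a1 za zNa1.
  apply: (mu_R4 x_leaf y_leaf z_leaf lca_xy lca_xz erefl _ lca_c lca_d).
  by exists w.
by rewrite cEd; exact: (lcaS2_upper lca_d).2.
Qed.

Lemma child_leaf_sigma_anc_lcaS v : child a v ->
  exists z, [/\ is_leaf z, anc z v & anc (sigma z) c].
Proof.
move=> a_v; have [->|vNa1] := classic (v = a1).
  by exists x; split=> //; exact: (lcaS2_upper lca_c).1.
have [z [z_leaf zv]] := exists_leaf_below (proj1 a_v).
exists z; split=> //; apply: sigma_anc_lcaS => //.
  exact: anc_trans zv (child_anc a_v).
exact: anc_child_disjoint a_v a_a1 vNa1 zv.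
Qed.

Lemma speciation_anc_lcaS : anc w c.
Proof.
have [[v1 [v2 [a_v1 [a_v2 [v1Nv2 lca_w]]]]] incomp] := mu_inner mu_a w_inner.
have [z1 [z1_leaf z1v1 z1c]] := child_leaf_sigma_anc_lcaS a_v1.
have [z2 [z2_leaf z2v2 z2c]] := child_leaf_sigma_anc_lcaS a_v2.
exact: incomparable_lcaS_anc lca_w (incomp v1 v2 a_v1 a_v2 v1Nv2)
  (sle_sigma_mu z1_leaf z1v1) (sle_sigma_mu z2_leaf z2v2) z1c z2c.
Qed.

End Speciation.
End Reconciliation.

Theorem corollary1 (S T : ptree) (sigma : T -> S) (mu : T -> selt S) :
  planted_phylo S -> planted_phylo T ->
  (forall v : T, is_leaf v -> is_leaf (sigma v)) ->
  reconciliation sigma mu -> axiomR4 sigma mu ->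
  forall A : {set T}, (forall v, v \in A -> is_leaf v) ->
  2 <= #|sigma @: A| ->
  forall a : T, is_lca (fun u => u \in A) a ->
  forall s : S, is_lcaS (fun x => exists2 u, u \in A & x = SV (sigma u)) s ->
  slt (SV s) (mu a) ->
  exists e, mu a = SE e.
Proof.
move=> _ T_planted leaf_sigma [R0 [R1 [R2 R3]]] R4 A A_leaf card_A a lca_a s lca_s [].
case mu_a: (mu a) => [w|e] /= sw sNw; last by exists e.
have w_nonleaf : ~ is_leaf w.
  by apply: (anc_neq_not_leaf sw) => sEw; apply: sNw; rewrite sEw.
have [x xA] : exists x, x \in A.
  case: (set_0Vmem A) => [A0|[x xA]]; last by exists x.
  by move: card_A; rewrite A0 imset0 cards0.
have xNa : x <> a.
  move=> xEa; apply: w_nonleaf; move: (R1 _ (A_leaf _ xA)); rewrite xEa mu_a => [[->]].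
  by apply: leaf_sigma; rewrite -xEa; exact: A_leaf.
have [a1 [y [a_a1 x_a1 yA y_a1]]] := is_lca_split lca_a xA xNa.
have aN0 : a <> root0 T.
  move=> a0; apply: y_a1; apply: planted_anc_child_root0 => //; first by rewrite -a0.
  exact: (A_leaf _ yA).1.
have w_inner : inner w by split=> // w0; apply: aN0; apply/R0; rewrite mu_a w0.
have [c lca_c] := lcaS2_exists (sigma x) (sigma y).
have cs : anc c s.
  apply: (lcaS_anc lca_c (or_introl erefl)) => _ [->|->];
    apply: (proj1 lca_s); by [exists x | exists y].
have wc := speciation_anc_lcaS R1 R2 R3 R4 mu_a w_inner a_a1 (A_leaf _ xA) x_a1
  (A_leaf _ yA) (proj1 lca_a _ yA) y_a1 lca_c.
by case: sNw; rewrite (anc_antisym sw (anc_trans wc cs)).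
Qed.
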